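(* Let $\mathbf{v}(x)\in\mathbb{R}^K$, $x$ ranging over a finite index set, with $\mathbf{v}(x)\ne\mathbf{0}$ for all $x$, let $\lambda_F\ge0$, and let $\mathbf{S}^{(k)}$ be a real invertible $K\times K$ matrix. Define, for invertible $K\times K$ matrices $\mathbf{S}$, $$R_F^{(k)}(\mathbf{S})=\sum_x\frac{0.5}{\|\mathbf{S}^{(k)}\mathbf{v}(x)\|_2}\|\mathbf{S}\mathbf{v}(x)\|_2^2-\tfrac12\log\det(\mathbf{S}\mathbf{S}^T)+\tfrac{\lambda_F}{2}\|\mathbf{S}\|_F^2,$$ and $\mathbf{A}_k=\sum_x\frac{1}{\|\mathbf{S}^{(k)}\mathbf{v}(x)\|_2}\mathbf{v}(x)\mathbf{v}(x)^T$ with eigendecomposition $\mathbf{A}_k=\mathbf{U}_k\mathbf{D}_k\mathbf{U}_k^T$ ($\mathbf{U}_k$ orthogonal, $\mathbf{D}_k$ diagonal). Assume $\mathbf{D}_k+\lambda_F\mathbf{I}$ is positive definite. Then the minimum of $R_F^{(k)}$ over $\mathbf{S}$ is attained at $\mathbf{S}^{(k+1)}=(\mathbf{D}_k+\lambda_F\mathbf{I})^{-1/2}\mathbf{U}_k^T$.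
   Context: $\|\cdot\|_F$ denotes the Frobenius norm; $R_F^{(k)}$ is the majorizer used in a majorization–minimization scheme for estimating the structure matrix $\mathbf{S}$ of a multivariate Laplacian prior on multi-order signal derivatives $\mathbf{v}(x)=(\mathbf{L}*g)(x)$. *)

From HB Require Import structures.
From mathcomp Require Import all_boot all_order all_algebra.
From mathcomp Require Import all_classical all_reals all_analysis.
Set Implicit Arguments. Unset Strict Implicit. Unset Printing Implicit Defensive.
Import Order.TTheory GRing.Theory Num.Theory.
Local Open Scope ring_scope.

Definition norm2 (R : realType) (K : nat) (w : 'cV[R]_K) : R :=
  Num.sqrt (\sum_(i < K) (w i 0) ^+ 2).

Definition frob2 (R : realType) (K : nat) (S : 'M[R]_K) : R :=
  \sum_(i < K) \sum_(j < K) (S i j) ^+ 2.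

Definition posdef (R : realType) (K : nat) (M : 'M[R]_K) : Prop :=
  M^T = M /\ forall z : 'cV[R]_K, z != 0 -> 0 < (z^T *m M *m z) 0 0.

Definition RF (R : realType) (K : nat) (T : finType) (v : T -> 'cV[R]_K)
    (lam : R) (Sk S : 'M[R]_K) : R :=
  \sum_(x : T) ((1/2) / norm2 (Sk *m v x)) * (norm2 (S *m v x)) ^+ 2
  - (1/2) * ln (\det (S *m S^T))
  + lam / 2 * frob2 S.

Definition Amat (R : realType) (K : nat) (T : finType) (v : T -> 'cV[R]_K)
    (Sk : 'M[R]_K) : 'M[R]_K :=
  \sum_(x : T) (norm2 (Sk *m v x))^-1 *: (v x *m (v x)^T).

(* (D + lam I)^{-1/2} for D = diag_mx d with D + lam I positive definite:
   the diagonal matrix with entries (d_i + lam)^{-1/2}. *)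
Definition invsqrt_diag (R : realType) (K : nat) (d : 'rV[R]_K) (lam : R)
    : 'M[R]_K :=
  diag_mx (\row_(i < K) (Num.sqrt (d 0 i + lam))^-1).

From HB Require Import structures.
From mathcomp Require Import all_boot all_order all_algebra.
From mathcomp Require Import all_classical all_reals all_analysis.
From mathcomp Require Import ring lra.

Set Implicit Arguments.
Unset Strict Implicit.
Unset Printing Implicit Defensive.
Import Order.TTheory GRing.Theory Num.Theory.
Local Open Scope ring_scope.

(* Write A_k + lam I = W W^T with W = U_k (D_k + lam I)^{1/2}.  With
   G = (S W)(S W)^T the majorizer becomes R_F(S) = (tr G - ln det G) / 2 + const,
   and tr G - ln det G >= K for every positive definite G, with equality at
   G = I, i.e. at S = W^{-1}.  That inequality follows by induction on K,
   splitting off the top-left entry a through its Schur complement and using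
   ln a <= a - 1. *)

Section PositiveDefinite.
Variable R : realType.

Lemma posdef_diag_gt0 n (M : 'M[R]_n) i : posdef M -> 0 < M i i.
Proof.
move=> [_ Mpos]; have e_neq0 : delta_mx i 0 != 0 :> 'cV[R]_n.
  apply/negP => /eqP /matrixP /(_ i 0); rewrite !mxE !eqxx => /eqP.
  by rewrite oner_eq0.
by move: (Mpos _ e_neq0); rewrite trmx_delta -rowE -colE !mxE.
Qed.

Lemma trmx_mul_self_gt0 n (w : 'cV[R]_n) : w != 0 -> 0 < (w^T *m w) 0 0.
Proof.
move=> w_neq0; have sq_ge0 j : 0 <= w^T 0 j * w j 0 by rewrite mxE -expr2 sqr_ge0.
rewrite mxE lt0r sumr_ge0 ?andbT //; apply: contra w_neq0 => /eqP sum0.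
apply/eqP/matrixP => i j; rewrite (ord1 j) [RHS]mxE.
have /eqP := psumr_eq0P (fun j _ => sq_ge0 j) sum0 (i := i) isT.
by rewrite mxE -expr2 sqrf_eq0 => /eqP.
Qed.

Lemma posdef_mulmx_tr n (B : 'M[R]_n) : B \in unitmx -> posdef (B *m B^T).
Proof.
rewrite -unitmx_tr => BTu; split; first by rewrite trmx_mul trmxK.
move=> z z_neq0; have -> : z^T *m (B *m B^T) *m z = (B^T *m z)^T *m (B^T *m z).
  by rewrite trmx_mul trmxK !mulmxA.
apply: trmx_mul_self_gt0; apply: contra z_neq0 => /eqP Bz0.
by rewrite -(mulKmx BTu z) Bz0 mulmx0.
Qed.

Definition schur_compl n (a : R) (b : 'M[R]_(1, n)) (c : 'M[R]_(n, 1))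
    (D : 'M[R]_n) : 'M[R]_n :=
  D - a^-1 *: (c *m b).

Lemma quadform_block_mx n (A : 'M[R]_1) (b : 'M[R]_(1, n)) (c : 'M[R]_(n, 1))
    (D : 'M[R]_n) (y : 'cV[R]_1) (z : 'cV[R]_n) :
  (col_mx y z)^T *m (block_mx A b c D : 'M[R]_(1 + n)) *m col_mx y z =
  y^T *m A *m y + y^T *m b *m z + z^T *m c *m y + z^T *m D *m z.
Proof.
rewrite tr_col_mx mul_row_block mul_row_col !mulmxDl ?mulmxA.
by rewrite !addrA (addrAC (y^T *m A *m y)).
Qed.

Lemma det_block_schur n (a : R) b c (D : 'M[R]_n) : a != 0 ->
  \det (block_mx a%:M b c D : 'M[R]_(1 + n)) = a * \det (schur_compl a b c D).
Proof.
move=> a_neq0.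
have -> : block_mx a%:M b c D = block_mx 1%:M 0 (a^-1 *: c) 1%:M
            *m block_mx a%:M b 0 (schur_compl a b c D) :> 'M[R]_(1 + n).
  rewrite mulmx_block !mul1mx !mul0mx !addr0 mul_mx_scalar scalerA mulfV //.
  by rewrite scale1r -scalemxAl addrC subrK.
by rewrite det_mulmx det_lblock det_ublock !det1 det_scalar expr1 !mul1r.
Qed.

Lemma mxtrace_block_schur n (a : R) b c (D : 'M[R]_n) :
  \tr (block_mx a%:M b c D : 'M[R]_(1 + n))
  = a + \tr (schur_compl a b c D) + a^-1 * \tr (b *m c).
Proof.
rewrite mxtrace_block mxtrace_scalar mulr1n raddfB /= mxtraceZ mxtrace_mulC.
by rewrite -addrA subrK.
Qed.

Section PosdefBlock.
Context {n : nat} {a : R} {b : 'M[R]_(1, n)} {c : 'M[R]_(n, 1)} {D : 'M[R]_n}.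
Hypothesis Gpd : posdef (block_mx a%:M b c D : 'M[R]_(1 + n)).

Lemma posdef_block_sym : c = b^T /\ D^T = D.
Proof.
have [Gsym _] := Gpd; move: Gsym.
by rewrite tr_block_mx => /eq_block_mx[_ _ -> ->].
Qed.

Lemma posdef_block_corner_gt0 : 0 < a.
Proof.
have [_ Gpos] := Gpd.
have := Gpos (col_mx 1 0); rewrite col_mx_eq0 oner_eq0 /= => /(_ isT).
rewrite quadform_block_mx trmx0 trmx1 !mulmx0 !mul0mx mul1mx mulmx1 !addr0.
by rewrite mxE eqxx mulr1n.
Qed.

(* Test the block form against [col_mx (- s / a) z] with [s = b z]. *)
Lemma posdef_schur_compl : posdef (schur_compl a b c D).
Proof.
have [cE DT] := posdef_block_sym; have a_neq0 := lt0r_neq0 posdef_block_corner_gt0.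
split; first by rewrite /schur_compl linearB /= linearZ /= trmx_mul cE trmxK DT.
move=> z z_neq0; set s := (b *m z) 0 0.
have bz : b *m z = s%:M by apply: mx11_scalar.
have zc : z^T *m c = s%:M by rewrite cE -trmx_mul bz tr_scalar_mx.
have [_ Gpos] := Gpd.
have := Gpos (col_mx ((- a^-1 * s)%:M) z).
rewrite col_mx_eq0 (negPf z_neq0) andbF => /(_ isT).
rewrite quadform_block_mx tr_scalar_mx -(mulmxA _ b z) bz zc -!scalar_mxM.
rewrite /schur_compl mulmxBr mulmxBl -scalemxAr -scalemxAl !mulmxA zc.
rewrite -(mulmxA _ b z) bz -scalar_mxM !mxE !eqxx !mulr1n.
set q := (\sum_j _).
suff -> : - a^-1 * s * a * (- a^-1 * s) + - a^-1 * s * s + s * (- a^-1 * s) + q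
          = q - a^-1 * (s * s) by [].
by field.
Qed.

End PosdefBlock.

Lemma posdef_tr_sub_ln_det n (G : 'M[R]_n) :
  posdef G -> 0 < \det G /\ n%:R <= \tr G - ln (\det G).
Proof.
elim: n G => [|n IH] G Gpd.
  by rewrite det_mx00 ln1 subr0 /mxtrace big_ord0.
have GE : G = block_mx (ulsubmx (G : 'M[R]_(1 + n)) 0 0)%:M
    (ursubmx (G : 'M[R]_(1 + n))) (dlsubmx (G : 'M[R]_(1 + n)))
    (drsubmx (G : 'M[R]_(1 + n))) :> 'M[R]_(1 + n).
  by rewrite -mx11_scalar submxK.
move: Gpd; rewrite GE; set a := ulsubmx _ 0 0; set b := ursubmx _.
move=> Gpd; have [cE _] := posdef_block_sym Gpd; rewrite cE in Gpd *.
have a_gt0 := posdef_block_corner_gt0 Gpd.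
have [det_gt0 IHschur] := IH _ (posdef_schur_compl Gpd).
rewrite det_block_schur ?lt0r_neq0 // mxtrace_block_schur.
split; first by rewrite mulr_gt0.
have bbT_ge0 : 0 <= a^-1 * \tr (b *m b^T).
  rewrite mulr_ge0 ?invr_ge0 ?(ltW a_gt0) // /mxtrace big_ord1 mxE.
  by apply: sumr_ge0 => j _; rewrite !mxE -expr2 sqr_ge0.
have ln_a : ln a <= a - 1 by have := @le_ln1Dx R (a - 1); rewrite subrKC; apply; lra.
rewrite lnM ?posrE // -natr1; lra.
Qed.

End PositiveDefinite.

Section Majorizer.
Variables (R : realType) (K : nat) (T : finType) (v : T -> 'cV[R]_K).
Variables (lam : R) (Sk : 'M[R]_K).

Lemma frob2E (S : 'M[R]_K) : frob2 S = \tr (S *m S^T).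
Proof.
rewrite /frob2 /mxtrace; apply: eq_bigr => i _; rewrite mxE.
by apply: eq_bigr => j _; rewrite !mxE expr2.
Qed.

Lemma norm2_sqrE (w : 'cV[R]_K) : norm2 w ^+ 2 = \tr (w *m w^T).
Proof.
rewrite /norm2 sqr_sqrtr; last by apply: sumr_ge0 => i _; apply: sqr_ge0.
by rewrite /mxtrace; apply: eq_bigr => i _; rewrite mxE big_ord1 !mxE expr2.
Qed.

Lemma RF_trace_logdet (S : 'M[R]_K) :
  RF v lam Sk S = 1/2 * (\tr (S *m (Amat v Sk + lam%:M) *m S^T)
                         - ln (\det (S *m S^T))).
Proof.
rewrite /RF /Amat frob2E mulrBr addrAC; congr (_ - _); apply/esym.
rewrite mulmxDr mulmxDl mulmx_sumr mulmx_suml mxtraceD raddf_sum /=.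
rewrite mul_mx_scalar -scalemxAl mxtraceZ mulrDr big_distrr /=; congr (_ + _).
  apply: eq_bigr => x _.
  by rewrite -scalemxAr -scalemxAl mxtraceZ norm2_sqrE trmx_mul !mulmxA mulrA mul1r.
ring.
Qed.

Section Factor.
Variable W : 'M[R]_K.
Hypothesis AW : Amat v Sk + lam%:M = W *m W^T.
Hypothesis Wu : W \in unitmx.

Lemma RF_factorE (S : 'M[R]_K) : S \in unitmx ->
  RF v lam Sk S = 1/2 * (\tr ((S *m W) *m (S *m W)^T)
                         - ln (\det ((S *m W) *m (S *m W)^T)))
                  + 1/2 * ln (\det (W *m W^T)).
Proof.
move=> Su; have [detSS_gt0 _] := posdef_tr_sub_ln_det (posdef_mulmx_tr Su).
have [detWW_gt0 _] := posdef_tr_sub_ln_det (posdef_mulmx_tr Wu).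
have SWE : (S *m W) *m (S *m W)^T = S *m (W *m W^T) *m S^T.
  by rewrite trmx_mul !mulmxA.
have detSW : \det ((S *m W) *m (S *m W)^T) = \det (S *m S^T) * \det (W *m W^T).
  by rewrite SWE !det_mulmx !det_tr; ring.
rewrite RF_trace_logdet AW detSW SWE lnM ?posrE //; ring.
Qed.

Lemma RF_min_at_inverse_factor (S0 : 'M[R]_K) : S0 *m W = 1%:M ->
  forall S, S \in unitmx -> RF v lam Sk S0 <= RF v lam Sk S.
Proof.
move=> S0W S Su; have [S0u _] := mulmx1_unit S0W.
rewrite !RF_factorE // S0W trmx1 mulmx1 mxtrace1 det1 ln1 subr0.
have SWu : S *m W \in unitmx by rewrite unitmx_mul Su Wu.
have [_] := posdef_tr_sub_ln_det (posdef_mulmx_tr SWu); lra.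
Qed.

End Factor.
End Majorizer.

Theorem proposition2 (R : realType) (K : nat) (T : finType)
    (v : T -> 'cV[R]_K) (lam : R) (Sk U : 'M[R]_K) (d : 'rV[R]_K) :
  (forall x, v x != 0) ->
  0 <= lam ->
  Sk \in unitmx ->
  U^T *m U = 1%:M ->
  Amat v Sk = U *m diag_mx d *m U^T ->
  posdef (diag_mx d + lam%:M) ->
  let Snext := invsqrt_diag d lam *m U^T in
  Snext \in unitmx /\
  forall S : 'M[R]_K, S \in unitmx -> RF v lam Sk Snext <= RF v lam Sk S.
Proof.
move=> _ _ _ UTU AE Epd Snext.
have ev_gt0 i : 0 < d 0 i + lam.
  by have := posdef_diag_gt0 i Epd; rewrite !mxE eqxx !mulr1n.
pose Q := diag_mx (\row_i Num.sqrt (d 0 i + lam)).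
have QinvQ : invsqrt_diag d lam *m Q = 1%:M.
  rewrite /invsqrt_diag mulmx_diag; apply/matrixP => i j.
  by rewrite !mxE mulVf // gt_eqF // sqrtr_gt0.
have QQT : Q *m Q^T = diag_mx d + lam%:M.
  rewrite tr_diag_mx mulmx_diag; apply/matrixP => i j.
  by rewrite !mxE -expr2 sqr_sqrtr ?ltW // mulrnDl.
have SnextW : Snext *m (U *m Q) = 1%:M by rewrite mulmxA -(mulmxA _ U^T) UTU mulmx1.
have AW : Amat v Sk + lam%:M = (U *m Q) *m (U *m Q)^T.
  rewrite trmx_mul !mulmxA -(mulmxA U) QQT AE mulmxDr mulmxDl mul_mx_scalar.
  by rewrite -scalemxAl (mulmx1C UTU) scalemx1.
split; first by have [] := mulmx1_unit SnextW.
exact: RF_min_at_inverse_factor AW (proj2 (mulmx1_unit SnextW)) _ SnextW.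
Qed.
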